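(* If $X$ is a crowded submaximal (Tychonoff) space, then $X$ has the property $(\kappa)$.
   Context: A space is crowded if it is non-empty and has no isolated points; it is submaximal if every dense subset is open. A family $\{A_\alpha\}$ of subsets of $X$ is strongly point-finite if there are open sets $U_\alpha\supseteq A_\alpha$ such that each point of $X$ lies in only finitely many $U_\alpha$. $X$ has property $(\kappa)$ if every pairwise disjoint sequence of finite subsets of $X$ has a strongly point-finite subsequence. All spaces are assumed Tychonoff. *)

From HB Require Import structures.
From mathcomp Require Import all_boot all_order all_algebra.
From mathcomp Require Import all_classical all_reals.
From mathcomp Require Import topology normedtype.
Set Implicit Arguments. Unset Strict Implicit. Unset Printing Implicit Defensive.
Import Order.TTheory GRing.Theory Num.Theory.
Import numFieldNormedType.Exports.
Local Open Scope classical_set_scope.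
Local Open Scope ring_scope.

Definition tychonoff_space (R : realType) (X : topologicalType) : Prop :=
  accessible_space X /\
  forall (B : set X) (x : X), closed B -> ~ B x ->
    exists f : X -> R, continuous f /\ f x = 0 /\ (forall y, B y -> f y = 1).

Definition crowded (X : topologicalType) : Prop :=
  (setT : set X) !=set0 /\ forall x : X, ~ isolated [set: X] x.

Definition submaximal (X : topologicalType) : Prop :=
  forall D : set X, dense D -> open D.

Definition strongly_point_finite (X : topologicalType) (A : nat -> set X) : Prop :=
  exists U : nat -> set X,
    (forall n, open (U n) /\ A n `<=` U n) /\
    (forall x : X, finite_set [set n | U n x]).

Definition property_kappa (X : topologicalType) : Prop :=
  forall F : nat -> set X,
    (forall n, finite_set (F n)) ->
    (forall n m, n <> m -> F n `&` F m = set0) ->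
    exists phi : nat -> nat, (forall n, (phi n < phi n.+1)%N) /\
      strongly_point_finite (F \o phi).
Arguments tychonoff_space : clear implicits.

(* Let S be the union of the F n.  In a submaximal space every set with empty
   interior is closed, so every subset of the "boundary part" N = S \ S° is
   closed.  By regularity, the finite set F n \ S° can be enclosed in an open
   W n whose closure misses the closed set N \ F n.  Then
     U n = ((W n \ closure W 0 \ ... \ closure W (n-1)) ∪ S°)
           \ (F 0 ∪ ... ∪ F (n-1))
   is an open expansion of F n: a point of S lies in F m and so in no U n
   with n > m, and a point outside S lies in at most one
   W n \ closure W 0 \ ... \ closure W (n-1). *)

From mathcomp Require Import all_boot all_order all_algebra.
From mathcomp Require Import all_classical all_reals.
From mathcomp Require Import topology normedtype.
Import Order.TTheory GRing.Theory Num.Theory.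
Import numFieldNormedType.Exports.
Local Open Scope classical_set_scope.
Local Open Scope ring_scope.

Definition finite_regular (X : topologicalType) : Prop :=
  forall (C G : set X), closed C -> finite_set G -> G `&` C = set0 ->
    exists W : set X, [/\ open W, G `<=` W & closure W `<=` ~` C].

Lemma tychonoff_regular_point {R : realType} {X : topologicalType}
    {C : set X} {x : X} :
  tychonoff_space R X -> closed C -> ~ C x ->
  exists W : set X, [/\ open W, W x & closure W `<=` ~` C].
Proof.
move=> [_ creg] cC nCx; have [f [fc [fx f1]]] := creg C x cC nCx.
exists (f @^-1` [set r : R | r < 2^-1]); split.
- by apply: open_comp => [y _|]; [exact: fc|exact: open_lt].
- by rewrite /= fx invr_gt0.
have half_closed : closed (f @^-1` [set r : R | r <= 2^-1]).
  by apply: preimage_closed => [y _|]; [exact: fc|exact: closed_le].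
move=> y /(closureS (fun z => @ltW _ _ (f z) 2^-1)).
rewrite -(closure_id _).1 //= => fy Cy.
by move: fy; rewrite f1 // leNgt invf_lt1 // ltr1n.
Qed.

Lemma tychonoff_finite_regular (R : realType) (X : topologicalType) :
  tychonoff_space R X -> finite_regular X.
Proof.
move=> tych C G cC fG GC.
have /choice [W hW] : forall x, exists W : set X,
    G x -> [/\ open W, W x & closure W `<=` ~` C].
  move=> x; have [Gx|nGx] := pselect (G x); last by exists set0.
  have nCx : ~ C x by move=> Cx; have : (G `&` C) x by []; rewrite GC.
  by have [W' hW'] := tychonoff_regular_point tych cC nCx; exists W'.
exists (\bigcup_(x in G) W x); split.
- by apply: bigcup_open => x /hW[].
- by move=> x Gx; exists x => //; have [] := hW x Gx.
have closed_cl : closed (\bigcup_(x in G) closure (W x)).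
  by apply: closed_bigcup => // x _; exact: closed_closure.
have cover : \bigcup_(x in G) W x `<=` \bigcup_(x in G) closure (W x).
  by move=> z [x Gx Wz]; exists x => //; exact: subset_closure.
move=> y /(closureS cover); rewrite -(closure_id _).1 // => -[x Gx].
by have [_ _] := hW x Gx; apply.
Qed.

Lemma submaximal_closed_interior0 {X : topologicalType} (A : set X) :
  submaximal X -> A° = set0 -> closed A.
Proof.
move=> submax A0; rewrite -(setCK A); apply/open_closedC/submax.
move=> O O0 oO; apply/set0P/negP => /eqP /subsets_disjoint OA.
have OI : O `<=` A° by rewrite -open_subsetE.
by case: O0 => x /OI; rewrite A0.
Qed.

Lemma interior_setD_interior {X : topologicalType} (S : set X) :
  (S `\` S°)° = set0.
Proof.
apply/seteqP; split => // x Ix.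
have [_ nIx] := interior_subset Ix.
by apply: nIx; apply: interiorS Ix => y [].
Qed.

Lemma submaximal_closed_setD_interior {X : topologicalType} (S A : set X) :
  submaximal X -> A `<=` S `\` S° -> closed A.
Proof.
move=> submax AN; apply: submaximal_closed_interior0 => //.
by rewrite -subset0 -(interior_setD_interior S); exact: interiorS.
Qed.

Section submaximal_expansion.
Variable X : topologicalType.
Hypotheses (X_T1 : accessible_space X) (X_reg : finite_regular X).
Hypothesis X_submax : submaximal X.
Variable F : nat -> set X.
Hypothesis finF : forall n, finite_set (F n).
Hypothesis disjF : forall n m, n <> m -> F n `&` F m = set0.

Let S := \bigcup_n F n.

Let F_inj_at n m y : F n y -> F m y -> n = m.
Proof.
move=> Fn Fm; apply: contrapT => nm.
by have : (F n `&` F m) y by []; rewrite disjF.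
Qed.

Let separation n : exists W : set X,
  [/\ open W, F n `\` S° `<=` W & closure W `<=` ~` ((S `\` S°) `\` F n)].
Proof.
apply: X_reg.
- by apply: (@submaximal_closed_setD_interior _ S) => // y [].
- by apply: sub_finite_set (finF n) => y [].
- by apply/seteqP; split => // y [[Fy _] [_ nFy]].
Qed.

Let W n := projT1 (cid (separation n)).
Let W_spec n : [/\ open (W n), F n `\` S° `<=` W n
  & closure (W n) `<=` ~` ((S `\` S°) `\` F n)] := projT2 (cid (separation n)).

Let V n := W n `\` \bigcup_(j in `I_n) closure (W j).
Let U n := (V n `|` S°) `\` \bigcup_(m in `I_n) F m.

Let open_U n : open (U n).
Proof.
have [oW _ _] := W_spec n.
rewrite /U /V !setDE; apply: openI; last first.
  apply/closed_openC/closed_bigcup => // m _.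
  exact: (iffLR accessible_finite_set_closed X_T1).
apply: openU; last exact: open_interior.
apply: openI => //; apply/closed_openC/closed_bigcup => // j _.
exact: closed_closure.
Qed.

Let F_sub_U n : F n `<=` U n.
Proof.
move=> y Fy; split; last first.
  by move=> [m /= mn /F_inj_at /(_ Fy) mE]; move: mn; rewrite mE ltnn.
have [Iy|nIy] := pselect (S° y); [by right | left].
have [_ GW _] := W_spec n; split; first exact: GW.
move=> [j /= jn]; have [_ _ clW] := W_spec j; move=> /clW; apply.
split; first by split => //; exists n.
by move=> /F_inj_at /(_ Fy) jE; move: jn; rewrite jE ltnn.
Qed.

Let V_uniq x n k : V n x -> V k x -> n = k.
Proof.
have Wcl j : V j x -> closure (W j) x by move=> [Wx _]; exact: subset_closure.
move=> Vn Vk; case: (ltngtP n k) => // [nk|kn].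
- by case: Vk => _ []; exists n => //; exact: Wcl.
- by case: Vn => _ []; exists k => //; exact: Wcl.
Qed.

Let U_point_finite x : finite_set [set n | U n x].
Proof.
have [[m _ Fm]|nSx] := pselect (S x).
  apply: sub_finite_set (finite_II m.+1) => n [_ nFm] /=.
  by rewrite ltnNge; apply/negP => mn; apply: nFm; exists m.
have U_V n : U n x -> V n x by move=> [[//|/interior_subset]].
have [[k Vk]|nV] := pselect (exists k, V k x).
  apply: sub_finite_set (finite_set1 k) => n /U_V Vn.
  exact: V_uniq Vn Vk.
apply: sub_finite_set (finite_set0 nat) => n /U_V Vn.
by apply: nV; exists n.
Qed.

Lemma submaximal_strongly_point_finite : strongly_point_finite F.
Proof.
exists U; split; last exact: U_point_finite.
by move=> n; split; [exact: open_U | exact: F_sub_U].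
Qed.

End submaximal_expansion.

Theorem mainTheorem4 (R : realType) (X : topologicalType) :
  tychonoff_space R X -> crowded X -> submaximal X -> property_kappa X.
Proof.
move=> tych _ submax F finF disjF; exists id; split => //.
apply: submaximal_strongly_point_finite => //; first by case: tych.
exact: tychonoff_finite_regular tych.
Qed.
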